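(* For all $t\in\mathbb N$ and real $\vartheta$ we have $S_{2t}(\vartheta)=D_0(\vartheta)S_t(\vartheta)$ and $S_{2t+1}(\vartheta)=D_1(\vartheta)S_t(\vartheta)$, with \[ S_0(\vartheta)=\Bigl(1,\ 1,\ \tfrac{\mathrm e(\vartheta)+1}{2},\ \tfrac{\mathrm e(\vartheta)+1}{2(2-\mathrm e(-\vartheta))},\ \tfrac{3\mathrm e(\vartheta)+2-\mathrm e(-\vartheta)}{4(2-\mathrm e(-\vartheta))},\ \tfrac{2\mathrm e(2\vartheta)+\mathrm e(\vartheta)+\mathrm e(-\vartheta)}{4(2-\mathrm e(-\vartheta))}\Bigr)^T. \] In particular, $\alpha_{8t}=\alpha_{4t}=\beta_{8t}=\beta_{4t}$ for all $t\in\mathbb N$.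
   Context: Let $\mathsf r(n)$ be the number of (overlapping) occurrences of $\mathtt{11}$ in the binary expansion of $n\in\mathbb N=\{0,1,\dots\}$, and $d(t,n)=\mathsf r(n+t)-\mathsf r(n)$. Let $a_t(k)$, $b_t(k)$ be the asymptotic densities (which exist) of $\{n\in\mathbb N:d(t,2n)=k\}$ and $\{n\in\mathbb N:d(t,2n+1)=k\}$ respectively. Write $\mathrm e(\vartheta)=\exp(i\vartheta)$ and define $\alpha_t(\vartheta)=\sum_{k\in\mathbb Z}a_t(k)\mathrm e(k\vartheta)$, $\beta_t(\vartheta)=\sum_{k\in\mathbb Z}b_t(k)\mathrm e(k\vartheta)$, and $S_t(\vartheta)=(\alpha_{2t}(\vartheta),\beta_{2t}(\vartheta),\alpha_{2t+1}(\vartheta),\beta_{2t+1}(\vartheta),\alpha_{2t+2}(\vartheta),\beta_{2t+2}(\vartheta))^T\in\mathbb C^6$. With $x=\mathrm e(\vartheta)$, define the $6\times6$ matrices \[ D_0(\vartheta)=\frac12\begin{pmatrix}1&1&0&0&0&0\\1&1&0&0&0&0\\1&x&0&0&0&0\\0&0&1&x^{-1}&0&0\\0&0&1&1&0&0\\0&0&x&x^{-1}&0&0\end{pmatrix},\quad D_1(\vartheta)=\frac12\begin{pmatrix}0&0&1&1&0&0\\0&0&x&x^{-1}&0&0\\0&0&x&1&0&0\\0&0&0&0&1&x^{-1}\\0&0&0&0&1&1\\0&0&0&0&1&1\end{pmatrix}. \] *)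

From Stdlib Require Import Reals ZArith List Lia Lra.
From Coquelicot Require Import Coquelicot.
Import ListNotations.

(* r n : number of (overlapping) occurrences of "11" in the binary expansion
   of n, i.e. the number of positions i with bits i and i+1 of n both 1.
   Bits at positions >= n are 0 (n < 2^n), so scanning i in [0, n] suffices. *)
Definition r (n : nat) : nat :=
  length (filter (fun i => andb (Nat.testbit n i) (Nat.testbit n (S i))) (seq 0 (S n))).

Definition d (t n : nat) : Z := (Z.of_nat (r (n + t)) - Z.of_nat (r n))%Z.

Definition cnt (P : nat -> bool) (N : nat) : nat := length (filter P (seq 0 N)).

Definition density (P : nat -> bool) : R :=
  real (Lim_seq (fun N => (INR (cnt P N) / INR N)%R)).

Definition a (t : nat) (k : Z) : R := density (fun n => Z.eqb (d t (2 * n)) k).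
Definition b (t : nat) (k : Z) : R := density (fun n => Z.eqb (d t (2 * n + 1)) k).

Definition e (th : R) : Complex.C := (cos th, sin th).

Definition Zsum (g : Z -> R) : R :=
  (Series (fun n => g (Z.of_nat n)) + Series (fun n => g (- Z.of_nat (S n))%Z))%R.

Definition fourier (c : Z -> R) (th : R) : Complex.C :=
  (Zsum (fun k => c k * cos (IZR k * th)), Zsum (fun k => c k * sin (IZR k * th)))%R.

Definition alpha (t : nat) (th : R) : Complex.C := fourier (a t) th.
Definition beta (t : nat) (th : R) : Complex.C := fourier (b t) th.

Open Scope C_scope.

Definition S (t : nat) (th : R) (i : nat) : Complex.C :=
  match i with
  | 0 => alpha (2 * t) th
  | 1 => beta (2 * t) th
  | 2 => alpha (2 * t + 1) th
  | 3 => beta (2 * t + 1) th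
  | 4 => alpha (2 * t + 2) th
  | _ => beta (2 * t + 2) th
  end.

Definition half_mx (rows : list (list Complex.C)) (i j : nat) : Complex.C :=
  / RtoC 2 * nth j (nth i rows []) (RtoC 0).

Definition D0 (th : R) : nat -> nat -> Complex.C :=
  let x := e th in let o := RtoC 0 in let l := RtoC 1 in
  half_mx [ [l; l; o; o; o; o];
            [l; l; o; o; o; o];
            [l; x; o; o; o; o];
            [o; o; l; /x; o; o];
            [o; o; l; l; o; o];
            [o; o; x; /x; o; o] ].

Definition D1 (th : R) : nat -> nat -> Complex.C :=
  let x := e th in let o := RtoC 0 in let l := RtoC 1 in
  half_mx [ [o; o; l; l; o; o];
            [o; o; x; /x; o; o];
            [o; o; x; l; o; o];
            [o; o; o; o; l; /x];
            [o; o; o; o; l; l];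
            [o; o; o; o; l; l] ].

Definition mv (M : nat -> nat -> Complex.C) (v : nat -> Complex.C) (i : nat) : Complex.C :=
  M i 0%nat * v 0%nat + M i 1%nat * v 1%nat + M i 2%nat * v 2%nat
  + M i 3%nat * v 3%nat + M i 4%nat * v 4%nat + M i 5%nat * v 5%nat.

Definition S0_explicit (th : R) (i : nat) : Complex.C :=
  let x := e th in let y := e (- th) in
  match i with
  | 0 => RtoC 1
  | 1 => RtoC 1
  | 2 => (x + RtoC 1) / RtoC 2
  | 3 => (x + RtoC 1) / (RtoC 2 * (RtoC 2 - y))
  | 4 => (RtoC 3 * x + RtoC 2 - y) / (RtoC 4 * (RtoC 2 - y))
  | _ => (RtoC 2 * e (2 * th) + x + y) / (RtoC 4 * (RtoC 2 - y))
  end.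

From Stdlib Require Import Reals ZArith Lia Lra List.
From Coquelicot Require Import Coquelicot.

(* Writing [n = 2m + b] in binary, [r (2m + b) = r m + [b = 1 and m odd]].  Hence, for
   [t = 2u] or [t = 2u + 1], the even- and odd-indexed terms of [n |-> d t (2n)] and of
   [n |-> d t (2n + 1)] are the corresponding sequences for [u] (or [u + 1]) shifted by a
   constant in {-1, 0, 1}.  The level-set densities of such an interleaving are averages of
   those of its two halves, so they exist by induction on [t] (for [t = 1] the odd half of
   [n |-> d 1 (2n + 1)] is that sequence itself shifted by -1, which still determines all
   frequencies because the sequence is bounded above), and shifting by [c] multiplies
   the Fourier series by [e (c th)]: this yields [D0] and [D1].  [S 0] is then the fixed
   point of [D0] with [alpha 0 = beta 0 = 1], and since the first two rows of [D0] agree,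
   [alpha (4t) = beta (4t)], from which the identities at [8t] follow. *)

Definition pairs11 (n L : nat) : nat :=
  length (filter (fun i => andb (Nat.testbit n i) (Nat.testbit n (Datatypes.S i))) (seq 0 L)).

Lemma pairs11_saturate n L : (n < L)%nat -> pairs11 n L = r n.
Proof.
  induction L as [|L IH]; intro HL; [lia|].
  destruct (Nat.eq_dec L n) as [->|HLn]; [reflexivity|].
  unfold pairs11 in *. rewrite seq_S, filter_app, length_app, IH by lia. cbn [filter Nat.add].
  rewrite (Nat.bits_above_log2 n L); [cbn [andb length]; lia|].
  pose proof (Nat.log2_le_lin n (Nat.le_0_l n)). lia.
Qed.

Lemma pairs11_double_add (b : bool) n L :
  pairs11 (2 * n + Nat.b2n b) (Datatypes.S L) = (Nat.b2n (andb b (Nat.odd n)) + pairs11 n L)%nat.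
Proof.
  unfold pairs11. rewrite <- cons_seq, <- seq_shift. cbn [filter].
  rewrite Nat.testbit_0_r, Nat.testbit_succ_r, Nat.bit0_odd, filter_map_swap.
  rewrite (filter_ext _ (fun i => andb (Nat.testbit n i) (Nat.testbit n (Datatypes.S i))))
    by (intro i; rewrite !Nat.testbit_succ_r; reflexivity).
  destruct (andb b (Nat.odd n)); cbn [length]; rewrite length_map; reflexivity.
Qed.

Lemma r_double_add (b : bool) n : r (2 * n + Nat.b2n b) = (r n + Nat.b2n (andb b (Nat.odd n)))%nat.
Proof.
  destruct n as [|n]; [destruct b; reflexivity|].
  transitivity (pairs11 (2 * Datatypes.S n + Nat.b2n b) (Datatypes.S (2 * Datatypes.S n + Nat.b2n b)));
    [reflexivity|].
  rewrite pairs11_double_add, pairs11_saturate by lia. lia.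
Qed.

Lemma r_double n : r (2 * n) = r n.
Proof.
  pose proof (r_double_add false n) as H. cbn [Nat.b2n andb] in H.
  rewrite !Nat.add_0_r in H. exact H.
Qed.

Lemma r_double_succ n : r (2 * n + 1) = (r n + Nat.b2n (Nat.odd n))%nat.
Proof. exact (r_double_add true n). Qed.

Lemma d_double_double u n : d (2 * u) (2 * n) = d u n.
Proof.
  unfold d. replace (2 * n + 2 * u)%nat with (2 * (n + u))%nat by lia.
  rewrite !r_double. reflexivity.
Qed.

Lemma d_double_double_succ u n :
  d (2 * u) (2 * n + 1) = (d u n + Z.b2z (Nat.odd (n + u)) - Z.b2z (Nat.odd n))%Z.
Proof.
  unfold d. replace (2 * n + 1 + 2 * u)%nat with (2 * (n + u) + 1)%nat by lia.
  rewrite !r_double_succ, !Nat2Z.inj_add.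
  destruct (Nat.odd (n + u)), (Nat.odd n); cbn; lia.
Qed.

Lemma d_double_succ_double u n :
  d (2 * u + 1) (2 * n) = (d u n + Z.b2z (Nat.odd (n + u)))%Z.
Proof.
  unfold d. replace (2 * n + (2 * u + 1))%nat with (2 * (n + u) + 1)%nat by lia.
  rewrite r_double_succ, !r_double, Nat2Z.inj_add.
  destruct (Nat.odd (n + u)); cbn; lia.
Qed.

Lemma d_double_succ_double_succ u n :
  d (2 * u + 1) (2 * n + 1) = (d (u + 1) n - Z.b2z (Nat.odd n))%Z.
Proof.
  unfold d. replace (2 * n + 1 + (2 * u + 1))%nat with (2 * (n + (u + 1)))%nat by lia.
  rewrite r_double_succ, !r_double, Nat2Z.inj_add.
  destruct (Nat.odd n); cbn; lia.
Qed.

Definition Zsummable (f : Z -> R) : Prop :=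
  ex_series (fun n => Rabs (f (Z.of_nat n))) /\
  ex_series (fun n => Rabs (f (- Z.of_nat (Datatypes.S n))%Z)).

Lemma Zsum_ext f g : (forall k, f k = g k) -> Zsum f = Zsum g.
Proof.
  intro Hfg. unfold Zsum.
  rewrite (Series_ext _ _ (fun n => Hfg _)), (Series_ext _ _ (fun n => Hfg _)). reflexivity.
Qed.

Lemma ex_series_Rabs_dominated (a b : nat -> R) (M : R) :
  (forall n, Rabs (b n) <= M * Rabs (a n)) ->
  ex_series (fun n => Rabs (a n)) -> ex_series (fun n => Rabs (b n)).
Proof.
  intros Hba Ha. apply (@ex_series_le R_AbsRing R_CompleteNormedModule _ (fun n => M * Rabs (a n))).
  - intro n. change (Rabs (Rabs (b n)) <= M * Rabs (a n)). rewrite Rabs_Rabsolu. apply Hba.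
  - exact (ex_series_scal_l M _ Ha).
Qed.

Lemma Zsummable_dominated f g (M : R) :
  (forall k, Rabs (g k) <= M * Rabs (f k)) -> Zsummable f -> Zsummable g.
Proof.
  intros Hgf [Hp Hn]. split; apply (ex_series_Rabs_dominated _ _ M (fun n => Hgf _)); assumption.
Qed.

Lemma Zsummable_ext f g : (forall k, f k = g k) -> Zsummable f -> Zsummable g.
Proof. intro Hfg. apply (Zsummable_dominated f g 1). intro k. rewrite Hfg. lra. Qed.

Lemma ex_series_Rabs_lincomb (a b : R) (u v : nat -> R) :
  ex_series (fun n => Rabs (u n)) -> ex_series (fun n => Rabs (v n)) ->
  ex_series (fun n => Rabs (a * u n + b * v n)).
Proof.
  intros Hu Hv.
  apply (@ex_series_le R_AbsRing R_CompleteNormedModule _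
           (fun n => Rabs a * Rabs (u n) + Rabs b * Rabs (v n))).
  - intro n. change (Rabs (Rabs (a * u n + b * v n)) <= Rabs a * Rabs (u n) + Rabs b * Rabs (v n)).
    rewrite Rabs_Rabsolu, <- !Rabs_mult. apply Rabs_triang.
  - apply (@ex_series_plus R_AbsRing); [exact (ex_series_scal_l _ _ Hu)|exact (ex_series_scal_l _ _ Hv)].
Qed.

Lemma Zsummable_lincomb (a b : R) f g :
  Zsummable f -> Zsummable g -> Zsummable (fun k => a * f k + b * g k).
Proof. intros [Fp Fn] [Gp Gn]. split; apply ex_series_Rabs_lincomb; assumption. Qed.

Lemma Zsum_lincomb (a b : R) f g : Zsummable f -> Zsummable g ->
  Zsum (fun k => a * f k + b * g k) = a * Zsum f + b * Zsum g.
Proof.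
  intros [Fp Fn] [Gp Gn]. unfold Zsum.
  assert (Hscal : forall (c : R) u, ex_series (fun n => Rabs (u n)) -> ex_series (fun n => c * u n))
    by (intros c u Hu; exact (ex_series_scal_l c u (ex_series_Rabs u Hu))).
  rewrite !(Series_plus (fun n => a * _) (fun n => b * _)), !Series_scal_l by auto.
  ring.
Qed.

Lemma Zsummable_shift1 f :
  Zsummable f -> Zsummable (fun k => f (k - 1)%Z) /\ Zsummable (fun k => f (k + 1)%Z).
Proof.
  intros [Hp Hn]. split; split.
  - apply ex_series_incr_1.
    apply (ex_series_ext (fun n => Rabs (f (Z.of_nat n)))); [|exact Hp].
    intro n. do 2 f_equal. lia.
  - apply ex_series_incr_1 in Hn.
    apply (ex_series_ext (fun n => Rabs (f (- Z.of_nat (Datatypes.S (Datatypes.S n)))%Z))); [|exact Hn].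
    intro n. do 2 f_equal. lia.
  - apply ex_series_incr_1 in Hp.
    apply (ex_series_ext (fun n => Rabs (f (Z.of_nat (Datatypes.S n))))); [|exact Hp].
    intro n. do 2 f_equal. lia.
  - apply ex_series_incr_1.
    apply (ex_series_ext (fun n => Rabs (f (- Z.of_nat (Datatypes.S n))%Z))); [|exact Hn].
    intro n. do 2 f_equal. lia.
Qed.

Lemma Zsum_shift1 f : Zsummable f -> Zsum (fun k => f (k - 1)%Z) = Zsum f.
Proof.
  intro Hf. destruct (proj1 (Zsummable_shift1 f Hf)) as [Sp _]. destruct Hf as [_ Fn].
  unfold Zsum. rewrite (Series_incr_1 _ (ex_series_Rabs _ Sp)), (Series_incr_1 _ (ex_series_Rabs _ Fn)).
  rewrite (Series_ext (fun n => f (Z.of_nat (Datatypes.S n) - 1)%Z) (fun n => f (Z.of_nat n)))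
    by (intro n; f_equal; lia).
  rewrite (Series_ext (fun n => f (- Z.of_nat (Datatypes.S n) - 1)%Z)
                      (fun n => f (- Z.of_nat (Datatypes.S (Datatypes.S n)))%Z))
    by (intro n; f_equal; lia).
  change (Z.of_nat 0 - 1)%Z with (- Z.of_nat 1)%Z. ring.
Qed.

Lemma Zsum_shift_nat (n : nat) f : Zsummable f ->
  Zsummable (fun k => f (k - Z.of_nat n)%Z) /\ Zsummable (fun k => f (k + Z.of_nat n)%Z) /\
  Zsum (fun k => f (k - Z.of_nat n)%Z) = Zsum f.
Proof.
  intro Hf. induction n as [|n [Hm [Hp Hs]]].
  - split; [|split]; [eapply Zsummable_ext; [|exact Hf] ..|apply Zsum_ext]; intro k; f_equal; lia.
  - destruct (Zsummable_shift1 _ Hm) as [Hm' _]. destruct (Zsummable_shift1 _ Hp) as [_ Hp'].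
    split; [|split].
    + revert Hm'. apply Zsummable_ext. intro k. f_equal. lia.
    + revert Hp'. apply Zsummable_ext. intro k. f_equal. lia.
    + rewrite <- Hs, <- (Zsum_shift1 _ Hm). apply Zsum_ext. intro k. f_equal. lia.
Qed.

Lemma Zsum_shift f (c : Z) : Zsummable f ->
  Zsummable (fun k => f (k - c)%Z) /\ Zsum (fun k => f (k - c)%Z) = Zsum f.
Proof.
  intro Hf. destruct (Z.le_gt_cases 0 c) as [Hc|Hc].
  - replace c with (Z.of_nat (Z.to_nat c)) by lia.
    destruct (Zsum_shift_nat (Z.to_nat c) f Hf) as [Hm [_ Hs]]. split; assumption.
  - set (m := Z.to_nat (- c)). destruct (Zsum_shift_nat m f Hf) as [_ [Hp _]].
    assert (Hc' : forall k, f (k + Z.of_nat m)%Z = f (k - c)%Z) by (intro k; f_equal; lia).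
    split; [exact (Zsummable_ext _ _ Hc' Hp)|].
    destruct (Zsum_shift_nat m _ Hp) as [_ [_ Hs]]. rewrite (Zsum_ext _ _ Hc') in Hs.
    rewrite <- Hs. apply Zsum_ext. intro k. f_equal. lia.
Qed.

Lemma Zsummable_mul_bounded p h (M : R) :
  Zsummable p -> (forall k, Rabs (h k) <= M) -> Zsummable (fun k => p k * h k).
Proof.
  intros Hp Hh. apply (Zsummable_dominated p _ M); [|exact Hp].
  intro k. rewrite Rabs_mult, Rmult_comm. apply Rmult_le_compat_r; [apply Rabs_pos|apply Hh].
Qed.

Lemma Zsummable_cos_sin p th : Zsummable p ->
  Zsummable (fun k => p k * cos (IZR k * th)) /\ Zsummable (fun k => p k * sin (IZR k * th)).
Proof.
  intro Hp. split; apply (Zsummable_mul_bounded p _ 1 Hp); intro k; apply Rabs_le;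
    [pose proof (COS_bound (IZR k * th)) | pose proof (SIN_bound (IZR k * th))]; lra.
Qed.

Lemma fourier_ext p q th : (forall k, p k = q k) -> fourier p th = fourier q th.
Proof.
  intro Hpq. unfold fourier.
  rewrite (Zsum_ext (fun k => p k * _) (fun k => q k * cos (IZR k * th))),
    (Zsum_ext (fun k => p k * _) (fun k => q k * sin (IZR k * th))) by (intro k; rewrite Hpq; reflexivity).
  reflexivity.
Qed.

Lemma fourier_shift p (c : Z) th : Zsummable p ->
  fourier (fun k => p (k - c)%Z) th = (e (IZR c * th) * fourier p th)%C.
Proof.
  intro Hp. destruct (Zsummable_cos_sin p th Hp) as [Pc Ps].
  set (pc := fun k => p k * cos (IZR k * th)). set (ps := fun k => p k * sin (IZR k * th)).
  set (a := IZR c * th).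
  assert (Hk : forall k, IZR k * th = IZR (k - c) * th + a)
    by (intro k; unfold a; rewrite minus_IZR; ring).
  assert (Ec : forall k, p (k - c)%Z * cos (IZR k * th)
                         = (fun j => cos a * pc j + - sin a * ps j) (k - c)%Z)
    by (intro k; unfold pc, ps; rewrite Hk, cos_plus; ring).
  assert (Es : forall k, p (k - c)%Z * sin (IZR k * th)
                         = (fun j => cos a * ps j + sin a * pc j) (k - c)%Z)
    by (intro k; unfold pc, ps; rewrite Hk, sin_plus; ring).
  unfold fourier. rewrite (Zsum_ext _ _ Ec), (Zsum_ext _ _ Es).
  rewrite (proj2 (Zsum_shift _ c (Zsummable_lincomb _ _ _ _ Pc Ps))),
    (proj2 (Zsum_shift _ c (Zsummable_lincomb _ _ _ _ Ps Pc))), !Zsum_lincomb by assumption.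
  unfold e, Cmult. simpl. f_equal; ring.
Qed.

Lemma fourier_avg u v th : Zsummable u -> Zsummable v ->
  fourier (fun k => (u k + v k) / 2) th = (/ 2 * (fourier u th + fourier v th))%C.
Proof.
  intros Hu Hv. destruct (Zsummable_cos_sin u th Hu), (Zsummable_cos_sin v th Hv).
  unfold fourier.
  rewrite (Zsum_ext (fun k => (u k + v k) / 2 * _)
             (fun k => / 2 * (u k * cos (IZR k * th)) + / 2 * (v k * cos (IZR k * th)))),
    (Zsum_ext (fun k => (u k + v k) / 2 * _)
             (fun k => / 2 * (u k * sin (IZR k * th)) + / 2 * (v k * sin (IZR k * th))))
    by (intro k; unfold Rdiv; ring).
  rewrite !Zsum_lincomb by assumption.
  unfold Cmult, Cplus, Cinv, RtoC. simpl. f_equal; field.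
Qed.

Definition freq (F : nat -> Z) (k : Z) (N : nat) : R :=
  INR (cnt (fun n => Z.eqb (F n) k) N) / INR N.

Definition level_density (F : nat -> Z) (k : Z) : R := density (fun n => Z.eqb (F n) k).

Definition has_freqs (F : nat -> Z) : Prop := forall k, ex_finite_lim_seq (freq F k).

Lemma level_density_lim F k (l : R) : is_lim_seq (freq F k) l -> level_density F k = l.
Proof. intro Hl. unfold level_density, density. fold (freq F k). now rewrite (is_lim_seq_unique _ _ Hl). Qed.

Lemma cnt_succ P N : cnt P (Datatypes.S N) = (cnt P N + if P N then 1 else 0)%nat.
Proof.
  unfold cnt. rewrite seq_S, filter_app, length_app. cbn [filter Nat.add].
  destruct (P N); reflexivity.
Qed.

Lemma freq_absent F k : (forall n, F n <> k) -> is_lim_seq (freq F k) 0.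
Proof.
  intro Hk. apply (is_lim_seq_ext (fun _ => 0)); [|apply is_lim_seq_const].
  intro N. unfold freq. replace (cnt _ N) with 0%nat; [cbn; lra|].
  induction N as [|N IH]; [reflexivity|]. rewrite cnt_succ, <- IH.
  destruct (Z.eqb_spec (F N) k); [exfalso; eapply Hk; eassumption|reflexivity].
Qed.

Lemma freq_const F k : (forall n, F n = k) -> is_lim_seq (freq F k) 1.
Proof.
  intro Hk. apply (is_lim_seq_ext_loc (fun _ => 1)); [|apply is_lim_seq_const].
  exists 1%nat. intros N HN. unfold freq. replace (cnt _ N) with N.
  - field. apply not_0_INR. lia.
  - clear HN. induction N as [|N IH]; [reflexivity|]. rewrite cnt_succ, <- IH, Hk, Z.eqb_refl. lia.
Qed.

Lemma has_freqs_const F c : (forall n, F n = c) -> has_freqs F.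
Proof.
  intros Hc k. destruct (Z.eq_dec c k) as [<-|Hck].
  - exists 1. exact (freq_const F c Hc).
  - exists 0. apply freq_absent. intro n. rewrite Hc. exact Hck.
Qed.

Lemma is_lim_seq_even_odd (u : nat -> R) (l : R) :
  is_lim_seq (fun N => u (2 * N)%nat) l -> is_lim_seq (fun N => u (2 * N + 1)%nat) l ->
  is_lim_seq u l.
Proof.
  intros He Ho. apply is_lim_seq_spec in He, Ho. apply is_lim_seq_spec. intro eps.
  destruct (He eps) as [N1 H1], (Ho eps) as [N2 H2].
  exists (2 * (N1 + N2))%nat. intros n Hn.
  destruct (Nat.Even_or_Odd n) as [[j ->]|[j ->]]; [apply H1|apply H2]; lia.
Qed.

Lemma is_lim_seq_inv_double_succ : is_lim_seq (fun N => / INR (2 * N + 1)) 0.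
Proof.
  change (Finite 0) with (Rbar_inv p_infty).
  apply is_lim_seq_inv; [|discriminate].
  apply (is_lim_seq_le_p_loc INR); [|apply is_lim_seq_INR].
  exists 0%nat. intros n _. apply le_INR. lia.
Qed.

Lemma is_lim_seq_count_double (c g : nat -> R) (L : R) :
  (forall N, c (2 * N)%nat = g N) ->
  (forall N, 0 <= c (2 * N + 1)%nat - c (2 * N)%nat <= 1) ->
  is_lim_seq (fun N => g N / INR N) L ->
  is_lim_seq (fun n => c n / INR n) (L / 2).
Proof.
  intros Hc Hd HL. apply is_lim_seq_even_odd.
  - apply (is_lim_seq_ext (fun N => / 2 * (g N / INR N))).
    + intro N. rewrite Hc, mult_INR. unfold Rdiv. rewrite Rinv_mult. change (INR 2) with 2. ring.
    + replace (L / 2) with (/ 2 * L) by (unfold Rdiv; ring).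
      exact (is_lim_seq_scal_l _ (/ 2) L HL).
  - (* [c (2N+1) / (2N+1) = (g N / N) (N / (2N+1)) + (c (2N+1) - c (2N)) / (2N+1)],
       with [N / (2N+1) = 1/2 - 1/(2(2N+1))] *)
    apply (is_lim_seq_ext_loc (fun N => g N / INR N * (/ 2 - / 2 * / INR (2 * N + 1))
                        + (c (2 * N + 1)%nat - c (2 * N)%nat) * / INR (2 * N + 1))).
    + exists 1%nat. intros N HN. rewrite <- (Hc N).
      assert (INR N <> 0) by (apply not_0_INR; lia).
      assert (INR (2 * N + 1) = 2 * INR N + 1) as -> by (rewrite plus_INR, mult_INR; simpl; ring).
      field. split; [pose proof (pos_INR N); lra | assumption].
    + assert (Hfactor : is_lim_seq (fun N => / 2 - / 2 * / INR (2 * N + 1)) (/ 2 - / 2 * 0)).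
      { apply (is_lim_seq_minus' (fun _ => / 2)); [apply is_lim_seq_const|].
        exact (is_lim_seq_scal_l _ (/ 2) 0 is_lim_seq_inv_double_succ). }
      assert (Hjump : is_lim_seq (fun N => (c (2 * N + 1)%nat - c (2 * N)%nat) * / INR (2 * N + 1)) 0).
      { apply (is_lim_seq_le_le (fun _ => 0) _ (fun N => / INR (2 * N + 1)));
          [|apply is_lim_seq_const|apply is_lim_seq_inv_double_succ].
        intro N. assert (0 < / INR (2 * N + 1)) by (apply Rinv_0_lt_compat, lt_0_INR; lia).
        specialize (Hd N). split; nra. }
      replace (L / 2) with (L * (/ 2 - / 2 * 0) + 0) by (unfold Rdiv; ring).
      exact (is_lim_seq_plus' _ _ _ _ (is_lim_seq_mult' _ _ _ _ HL Hfactor) Hjump).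
Qed.

Lemma freq_lim F k : has_freqs F -> is_lim_seq (freq F k) (level_density F k).
Proof. intro HF. destruct (HF k) as [l Hl]. rewrite (level_density_lim _ _ _ Hl). exact Hl. Qed.

Lemma freq_nonneg F k N : 0 <= freq F k N.
Proof.
  unfold freq. destruct N as [|N]; [cbn; lra|].
  apply Rdiv_le_0_compat; [apply pos_INR|apply lt_0_INR; lia].
Qed.

Lemma level_density_nonneg F k : has_freqs F -> 0 <= level_density F k.
Proof.
  intro HF. apply (is_lim_seq_le (fun _ => 0) (freq F k) 0 (level_density F k));
    [apply freq_nonneg|apply is_lim_seq_const|apply freq_lim, HF].
Qed.

Lemma sum_indicator_injective (g : nat -> Z) (v : Z) (M : nat) :
  (forall m n, g m = g n -> m = n) ->
  sum_f_R0 (fun n => if Z.eqb v (g n) then 1 else 0) M <= 1.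
Proof.
  intro Hg.
  enough (Hinv : sum_f_R0 (fun n => if Z.eqb v (g n) then 1 else 0) M <= 1 /\
                 ((forall n, (n <= M)%nat -> v <> g n) ->
                  sum_f_R0 (fun n => if Z.eqb v (g n) then 1 else 0) M = 0)) by apply Hinv.
  induction M as [|M [IHle IHzero]]; cbn.
  - destruct (Z.eqb_spec v (g 0%nat)) as [E|E]; split; try lra.
    intro Habs. exfalso. exact (Habs 0%nat (le_n 0) E).
  - destruct (Z.eqb_spec v (g (Datatypes.S M))) as [E|E]; split.
    + rewrite IHzero; [lra|]. intros n Hn Hv. rewrite Hv in E. apply Hg in E. lia.
    + intro Habs. exfalso. exact (Habs _ (le_n _) E).
    + lra.
    + intro Habs. rewrite IHzero; [ring|]. intros n Hn. apply Habs. lia.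
Qed.

Lemma sum_cnt_injective F (g : nat -> Z) (M N : nat) :
  (forall m n, g m = g n -> m = n) ->
  sum_f_R0 (fun n => INR (cnt (fun m => Z.eqb (F m) (g n)) N)) M <= INR N.
Proof.
  intro Hg. induction N as [|N IH].
  - cbn. rewrite sum_eq_R0; [lra|reflexivity].
  - rewrite (sum_eq _ (fun n => INR (cnt (fun m => Z.eqb (F m) (g n)) N)
                                + (if Z.eqb (F N) (g n) then 1 else 0)))
      by (intros n _; rewrite cnt_succ, plus_INR; destruct (Z.eqb (F N) (g n)); reflexivity).
    rewrite sum_plus, S_INR. pose proof (sum_indicator_injective g (F N) M Hg). lra.
Qed.

Lemma level_density_sum_le_1 F (g : nat -> Z) (M : nat) :
  has_freqs F -> (forall m n, g m = g n -> m = n) ->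
  sum_f_R0 (fun n => level_density F (g n)) M <= 1.
Proof.
  intros HF Hg.
  assert (Hlim : is_lim_seq (fun N => sum_f_R0 (fun n => freq F (g n) N) M)
                            (sum_f_R0 (fun n => level_density F (g n)) M)).
  { induction M as [|M IH]; cbn; [|apply (is_lim_seq_plus' _ _ _ _ IH)]; apply freq_lim, HF. }
  enough (Hle : forall N, sum_f_R0 (fun n => freq F (g n) N) M <= 1)
    by exact (is_lim_seq_le _ (fun _ => 1) _ 1 Hle Hlim (is_lim_seq_const 1)).
  intro N. destruct N as [|N].
  - unfold freq. cbn. rewrite sum_eq_R0; [lra|intros; cbn; unfold Rdiv; rewrite Rinv_0; ring].
  - unfold freq, Rdiv. rewrite <- scal_sum.
    pose proof (sum_cnt_injective F g M (Datatypes.S N) Hg).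
    assert (0 < INR (Datatypes.S N)) by (apply lt_0_INR; lia).
    apply (Rmult_le_reg_l (INR (Datatypes.S N))); [lra|].
    rewrite <- Rmult_assoc, Rinv_r, Rmult_1_l by lra. lra.
Qed.

Lemma ex_series_nonneg_bounded (u : nat -> R) (M : R) :
  (forall n, 0 <= u n) -> (forall N, sum_f_R0 u N <= M) -> ex_series u.
Proof.
  intros Hu HM. destruct (ex_finite_lim_seq_incr (sum_n u) M) as [l Hl].
  - intro n. rewrite !sum_n_Reals. cbn. specialize (Hu (Datatypes.S n)). lra.
  - intro n. rewrite sum_n_Reals. apply HM.
  - exists l. exact Hl.
Qed.

Lemma Zsummable_level_density F : has_freqs F -> Zsummable (level_density F).
Proof.
  intro HF. assert (Hpos := fun k => level_density_nonneg F k HF).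
  split; apply (ex_series_nonneg_bounded _ 1); try (intro; apply Rabs_pos); intro M;
    rewrite (sum_eq _ (fun n => level_density F _)) by (intros n _; apply Rabs_right, Rle_ge, Hpos);
    apply (level_density_sum_le_1 F _ M HF); intros; lia.
Qed.

Definition splits (F G H : nat -> Z) (c1 c2 : Z) : Prop :=
  (forall j, F (2 * j)%nat = (G j + c1)%Z) /\ (forall j, F (2 * j + 1)%nat = (H j + c2)%Z).

Section Interleave.

Variables (F G H : nat -> Z) (c1 c2 : Z).
Hypothesis HF : splits F G H c1 c2.

Lemma cnt_interleave k N :
  cnt (fun n => Z.eqb (F n) k) (2 * N) =
  (cnt (fun n => Z.eqb (G n) (k - c1)) N + cnt (fun n => Z.eqb (H n) (k - c2)) N)%nat.
Proof.
  destruct HF as [HG HH]. induction N as [|N IH]; [reflexivity|].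
  replace (2 * Datatypes.S N)%nat with (Datatypes.S (Datatypes.S (2 * N))) by lia.
  rewrite !cnt_succ, IH. replace (Datatypes.S (2 * N)) with (2 * N + 1)%nat by lia.
  rewrite HG, HH.
  destruct (Z.eqb_spec (G N) (k - c1)), (Z.eqb_spec (H N) (k - c2)),
    (Z.eqb_spec (G N + c1) k), (Z.eqb_spec (H N + c2) k); lia.
Qed.

Lemma freq_interleave k (lg lh : R) :
  is_lim_seq (freq G (k - c1)) lg -> is_lim_seq (freq H (k - c2)) lh ->
  is_lim_seq (freq F k) ((lg + lh) / 2).
Proof.
  intros Hg Hh. unfold freq.
  apply (is_lim_seq_count_double _ (fun N => INR (cnt (fun n => Z.eqb (G n) (k - c1)) N)
                                          + INR (cnt (fun n => Z.eqb (H n) (k - c2)) N))).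
  - intro N. rewrite cnt_interleave, plus_INR. reflexivity.
  - intro N. rewrite Nat.add_1_r, cnt_succ, plus_INR. destruct (Z.eqb (F (2 * N)%nat) k); cbn; lra.
  - apply (is_lim_seq_ext (fun N => freq G (k - c1) N + freq H (k - c2) N)).
    + intro N. unfold freq, Rdiv. ring.
    + apply is_lim_seq_plus'; assumption.
Qed.

Hypotheses (HG : has_freqs G) (HH : has_freqs H).

Lemma has_freqs_interleave : has_freqs F.
Proof.
  intro k. exists ((level_density G (k - c1) + level_density H (k - c2)) / 2).
  apply freq_interleave; apply freq_lim; assumption.
Qed.

Lemma level_density_interleave k :
  level_density F k = (level_density G (k - c1) + level_density H (k - c2)) / 2.
Proof. apply level_density_lim, freq_interleave; apply freq_lim; assumption. Qed.

Lemma fourier_level_density_interleave th :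
  fourier (level_density F) th =
  (/ 2 * (e (IZR c1 * th) * fourier (level_density G) th +
          e (IZR c2 * th) * fourier (level_density H) th))%C.
Proof.
  pose proof (Zsummable_level_density G HG) as SG. pose proof (Zsummable_level_density H HH) as SH.
  rewrite (fourier_ext _ _ th level_density_interleave), fourier_avg, !fourier_shift
    by first [assumption | exact (proj1 (Zsum_shift _ _ SG)) | exact (proj1 (Zsum_shift _ _ SH))].
  reflexivity.
Qed.

End Interleave.

(* Here [F] is bounded by [M], and its frequencies are obtained by downward induction on
   the value, starting above [M]. *)
Lemma has_freqs_self_similar F G c (M : Z) :
  splits F G F c (-1) -> (forall j, (G j + c <= M)%Z) -> has_freqs G -> has_freqs F.
Proof.
  intros HF HM HG. pose proof HF as [Heven Hodd].
  assert (Hbound : forall n, (F n <= M)%Z).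
  { intro n. induction n as [n IH] using lt_wf_ind.
    destruct (Nat.Even_or_Odd n) as [[j ->]|[j ->]].
    - rewrite Heven. apply HM.
    - rewrite Hodd. specialize (IH j ltac:(lia)). lia. }
  assert (Hdown : forall i : nat, ex_finite_lim_seq (freq F (M + 1 - Z.of_nat i))).
  { induction i as [|i [l Hl]].
    - exists 0. apply freq_absent. intro n. specialize (Hbound n). lia.
    - destruct (HG (M + 1 - Z.of_nat (Datatypes.S i) - c)%Z) as [lg Hg].
      exists ((lg + l) / 2). apply (freq_interleave F G F c (-1) HF _ _ _ Hg).
      replace (M + 1 - Z.of_nat (Datatypes.S i) - -1)%Z with (M + 1 - Z.of_nat i)%Z by lia.
      exact Hl. }
  intro k. destruct (Z.le_gt_cases k M) as [Hk|Hk].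
  - replace k with (M + 1 - Z.of_nat (Z.to_nat (M + 1 - k)))%Z by lia. apply Hdown.
  - exists 0. apply freq_absent. intro n. specialize (Hbound n). lia.
Qed.

Definition d_even (t n : nat) : Z := d t (2 * n).
Definition d_odd (t n : nat) : Z := d t (2 * n + 1).

Lemma odd_double_add j u : Nat.odd (2 * j + u) = Nat.odd u.
Proof. rewrite Nat.add_comm. apply Nat.odd_add_mul_2. Qed.

Lemma odd_double j : Nat.odd (2 * j) = false.
Proof. rewrite <- (Nat.add_0_r (2 * j)). apply odd_double_add. Qed.

Lemma odd_double_succ_add j u : Nat.odd (2 * j + 1 + u) = negb (Nat.odd u).
Proof. rewrite <- Nat.add_assoc, odd_double_add, Nat.odd_add. reflexivity. Qed.

Ltac d_parity u :=
  rewrite ?odd_double_add, ?odd_double_succ_add, ?odd_double, ?Nat.odd_odd;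
  destruct (Nat.odd u); cbn [Nat.odd Nat.even negb Z.b2z]; lia.

Lemma splits_d_even_double u : splits (d_even (2 * u)) (d_even u) (d_odd u) 0 0.
Proof. split; intro j; unfold d_even, d_odd; rewrite d_double_double; lia. Qed.

Lemma splits_d_odd_double u :
  splits (d_odd (2 * u)) (d_even u) (d_odd u) (Z.b2z (Nat.odd u)) (- Z.b2z (Nat.odd u)).
Proof. split; intro j; unfold d_even, d_odd; rewrite d_double_double_succ; d_parity u. Qed.

Lemma splits_d_even_double_succ u :
  splits (d_even (2 * u + 1)) (d_even u) (d_odd u) (Z.b2z (Nat.odd u)) (1 - Z.b2z (Nat.odd u)).
Proof. split; intro j; unfold d_even, d_odd; rewrite d_double_succ_double; d_parity u. Qed.

Lemma splits_d_odd_double_succ u :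
  splits (d_odd (2 * u + 1)) (d_even (u + 1)) (d_odd (u + 1)) 0 (-1).
Proof. split; intro j; unfold d_even, d_odd; rewrite d_double_succ_double_succ; d_parity u. Qed.

Lemma d_zero_l n : d 0 n = 0%Z.
Proof. unfold d. rewrite Nat.add_0_r. lia. Qed.

Lemma has_freqs_d t : has_freqs (d_even t) /\ has_freqs (d_odd t).
Proof.
  induction t as [t IH] using lt_wf_ind.
  destruct (Nat.Even_or_Odd t) as [[[|u] ->]|[u ->]].
  - split; apply (has_freqs_const _ 0); intro n; apply d_zero_l.
  - destruct (IH (Datatypes.S u)) as [HA HB]; [lia|]. split.
    + exact (has_freqs_interleave _ _ _ _ _ (splits_d_even_double _) HA HB).
    + exact (has_freqs_interleave _ _ _ _ _ (splits_d_odd_double _) HA HB).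
  - destruct (IH u) as [HA HB]; [lia|].
    assert (HA' := has_freqs_interleave _ _ _ _ _ (splits_d_even_double_succ u) HA HB).
    split; [exact HA'|]. destruct u as [|u].
    + apply (has_freqs_self_similar _ _ _ 1 (splits_d_odd_double_succ 0)); [|exact HA'].
      intro j. change (d (2 * 0 + 1) (2 * j) + 0 <= 1)%Z.
      rewrite d_double_succ_double, d_zero_l, Nat.add_0_r.
      destruct (Nat.odd j); cbn; lia.
    + destruct (IH (Datatypes.S u + 1)%nat) as [HA1 HB1]; [lia|].
      exact (has_freqs_interleave _ _ _ _ _ (splits_d_odd_double_succ _) HA1 HB1).
Qed.

Lemma e_0_mul th : e (0 * th) = 1%C.
Proof. unfold e. rewrite Rmult_0_l, cos_0, sin_0. reflexivity. Qed.

Lemma e_1_mul th : e (1 * th) = e th.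
Proof. rewrite Rmult_1_l. reflexivity. Qed.

Lemma e_opp th : e (- th) = (/ e th)%C.
Proof.
  unfold e, Cinv. cbn. rewrite cos_neg, sin_neg.
  assert (Hpyth : cos th ^ 2 + sin th ^ 2 = 1) by (rewrite <- (sin2_cos2 th); unfold Rsqr; ring).
  cbn in Hpyth. rewrite Hpyth. f_equal; field.
Qed.

Lemma e_m1_mul th : e (-1 * th) = (/ e th)%C.
Proof. rewrite <- e_opp. f_equal. ring. Qed.

Lemma e_double th : e (2 * th) = (e th * e th)%C.
Proof. unfold e, Cmult. cbn. rewrite cos_2a, sin_2a. f_equal; ring. Qed.

Lemma e_neq0 th : e th <> 0%C.
Proof.
  unfold e. intro E. injection E as Ec Es. pose proof (sin2_cos2 th) as Hpyth.
  rewrite Ec, Es in Hpyth. unfold Rsqr in Hpyth. lra.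
Qed.

Lemma alpha_fourier t th : alpha t th = fourier (level_density (d_even t)) th.
Proof. reflexivity. Qed.

Lemma beta_fourier t th : beta t th = fourier (level_density (d_odd t)) th.
Proof. reflexivity. Qed.

Section Recursions.

Variables (u : nat) (th : R).

Lemma alpha_double : alpha (2 * u) th = (/ 2 * (alpha u th + beta u th))%C.
Proof.
  destruct (has_freqs_d u) as [HA HB].
  rewrite alpha_fourier, (fourier_level_density_interleave _ _ _ _ _ (splits_d_even_double u) HA HB),
    <- alpha_fourier, <- beta_fourier, e_0_mul, !Cmult_1_l.
  reflexivity.
Qed.

Lemma beta_double : beta (2 * u) th =
  (/ 2 * (e (IZR (Z.b2z (Nat.odd u)) * th) * alpha u th +
          e (IZR (- Z.b2z (Nat.odd u)) * th) * beta u th))%C.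
Proof.
  destruct (has_freqs_d u) as [HA HB].
  rewrite beta_fourier, (fourier_level_density_interleave _ _ _ _ _ (splits_d_odd_double u) HA HB).
  reflexivity.
Qed.

Lemma alpha_double_succ : alpha (2 * u + 1) th =
  (/ 2 * (e (IZR (Z.b2z (Nat.odd u)) * th) * alpha u th +
          e (IZR (1 - Z.b2z (Nat.odd u)) * th) * beta u th))%C.
Proof.
  destruct (has_freqs_d u) as [HA HB].
  rewrite alpha_fourier,
    (fourier_level_density_interleave _ _ _ _ _ (splits_d_even_double_succ u) HA HB).
  reflexivity.
Qed.

Lemma beta_double_succ : beta (2 * u + 1) th =
  (/ 2 * (alpha (u + 1) th + / e th * beta (u + 1) th))%C.
Proof.
  destruct (has_freqs_d (u + 1)) as [HA HB].
  rewrite beta_fourier,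
    (fourier_level_density_interleave _ _ _ _ _ (splits_d_odd_double_succ u) HA HB),
    e_0_mul, e_m1_mul, Cmult_1_l.
  reflexivity.
Qed.

End Recursions.

Ltac phases :=
  rewrite ?odd_double, ?Nat.odd_odd; cbn [Nat.odd Nat.even negb Z.b2z Z.opp Z.sub Z.add Z.pos_sub];
  rewrite ?e_0_mul, ?e_1_mul, ?e_m1_mul.

Lemma S_double t th i : (i < 6)%nat -> S (2 * t) th i = mv (D0 th) (S t th) i.
Proof.
  intro Hi. pose proof (e_neq0 th) as Hx.
  destruct i as [|[|[|[|[|[|i]]]]]]; [..|lia]; unfold S, mv, D0, half_mx; cbn [nth].
  - rewrite alpha_double. field.
  - rewrite beta_double. phases. field.
  - rewrite alpha_double_succ. phases. field.
  - rewrite beta_double_succ. field. auto.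
  - replace (2 * (2 * t) + 2)%nat with (2 * (2 * t + 1))%nat by lia.
    rewrite alpha_double. field.
  - replace (2 * (2 * t) + 2)%nat with (2 * (2 * t + 1))%nat by lia.
    rewrite beta_double. phases. field. auto.
Qed.

Lemma S_double_succ t th i : (i < 6)%nat -> S (2 * t + 1) th i = mv (D1 th) (S t th) i.
Proof.
  intro Hi. pose proof (e_neq0 th) as Hx.
  destruct i as [|[|[|[|[|[|i]]]]]]; [..|lia]; unfold S, mv, D1, half_mx; cbn [nth].
  - rewrite alpha_double. field.
  - rewrite beta_double. phases. field. auto.
  - rewrite alpha_double_succ. phases. field.
  - rewrite beta_double_succ. replace (2 * t + 1 + 1)%nat with (2 * t + 2)%nat by lia. field. auto.
  - replace (2 * (2 * t + 1) + 2)%nat with (2 * (2 * t + 2))%nat by lia.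
    rewrite alpha_double. field.
  - replace (2 * (2 * t + 1) + 2)%nat with (2 * (2 * t + 2))%nat by lia.
    replace (2 * t + 2)%nat with (2 * (t + 1))%nat by lia.
    rewrite beta_double. phases. field.
Qed.

Lemma Series_first (u : nat -> R) : (forall n, u (Datatypes.S n) = 0) -> Series u = u 0%nat.
Proof.
  intro Hu. apply is_series_unique. change (is_lim_seq (sum_n u) (u 0%nat)).
  apply (is_lim_seq_ext (fun _ => u 0%nat)); [|apply is_lim_seq_const].
  intro N. rewrite sum_n_Reals. induction N as [|N IH]; [reflexivity|]. cbn. rewrite <- IH, Hu. ring.
Qed.

Lemma Zsum_single g : (forall k, k <> 0%Z -> g k = 0) -> Zsum g = g 0%Z.
Proof.
  intro Hg. unfold Zsum. rewrite !Series_first; try (intro n; apply Hg; lia).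
  rewrite (Hg (- Z.of_nat 1)%Z) by lia. apply Rplus_0_r.
Qed.

Lemma fourier_level_density_zero F th : (forall n, F n = 0%Z) -> fourier (level_density F) th = 1%C.
Proof.
  intro HF. assert (Hk : forall k, k <> 0%Z -> level_density F k = 0).
  { intros k Hk. apply level_density_lim, freq_absent. intro n. rewrite HF. auto. }
  unfold fourier. rewrite !Zsum_single by (intros k Hnz; rewrite Hk by exact Hnz; ring).
  rewrite (level_density_lim _ _ _ (freq_const F 0 HF)), Rmult_0_l, cos_0, sin_0.
  unfold RtoC. f_equal; ring.
Qed.

Lemma alpha_zero th : alpha 0 th = 1%C.
Proof. apply fourier_level_density_zero. intro n. apply d_zero_l. Qed.

Lemma beta_zero th : beta 0 th = 1%C.
Proof. apply fourier_level_density_zero. intro n. apply d_zero_l. Qed.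

Lemma two_mul_e_sub_1_neq0 th : (2 * e th - 1)%C <> 0%C.
Proof.
  unfold e, RtoC, Cminus, Cplus, Cmult, Copp. cbn. intro E. injection E as Ere Eim.
  pose proof (sin2_cos2 th) as Hpyth. unfold Rsqr in Hpyth. nra.
Qed.

Lemma S_zero_explicit th i : (i < 6)%nat -> S 0 th i = S0_explicit th i.
Proof.
  intro Hi. pose proof (e_neq0 th) as Hx. pose proof (two_mul_e_sub_1_neq0 th) as Hy.
  assert (Ha1 : alpha 1 th = (/ 2 * (1 + e th))%C).
  { pose proof (alpha_double_succ 0 th) as H. cbn [Nat.mul Nat.add] in H.
    rewrite H, alpha_zero, beta_zero. phases. field. }
  (* [beta 1] occurs on both sides of its recursion, which is solved for it. *)
  assert (Hb1 : beta 1 th = (alpha 1 th / (2 - / e th))%C).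
  { pose proof (beta_double_succ 0 th) as H. cbn [Nat.mul Nat.add] in H.
    assert (E : (beta 1 th * (2 - / e th))%C = alpha 1 th).
    { transitivity (2 * beta 1 th - / e th * beta 1 th)%C; [ring|].
      rewrite H at 1. field. exact Hx. }
    rewrite <- E. field. split; assumption. }
  destruct i as [|[|[|[|[|[|i]]]]]]; [..|lia]; unfold S, S0_explicit; cbn [Nat.mul Nat.add];
    rewrite ?e_opp, ?e_double.
  - apply alpha_zero.
  - apply beta_zero.
  - rewrite Ha1. field.
  - rewrite Hb1, Ha1. field. auto.
  - rewrite (alpha_double 1), Hb1, Ha1. field. auto.
  - rewrite (beta_double 1). phases. rewrite Hb1, Ha1. field. auto.
Qed.

Lemma alpha_eq_beta_4t t th : alpha (4 * t) th = beta (4 * t) th.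
Proof.
  replace (4 * t)%nat with (2 * (2 * t))%nat by lia.
  change (S (2 * t) th 0 = S (2 * t) th 1). rewrite !S_double by lia. reflexivity.
Qed.

Lemma alpha_beta_8t_4t t th :
  alpha (8 * t) th = alpha (4 * t) th /\ alpha (4 * t) th = beta (8 * t) th /\
  beta (8 * t) th = beta (4 * t) th.
Proof.
  pose proof (alpha_eq_beta_4t t th) as H4. pose proof (alpha_eq_beta_4t (2 * t) th) as H8.
  replace (4 * (2 * t))%nat with (8 * t)%nat in H8 by lia.
  assert (Ha8 : alpha (8 * t) th = alpha (4 * t) th).
  { replace (8 * t)%nat with (2 * (4 * t))%nat by lia. rewrite alpha_double, <- H4. field. }
  rewrite <- H8, Ha8, <- H4. auto.
Qed.

Theorem proposition3p3 :
  (forall (t : nat) (th : R) (i : nat), (i < 6)%nat ->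
      S (2 * t) th i = mv (D0 th) (S t th) i /\
      S (2 * t + 1) th i = mv (D1 th) (S t th) i) /\
  (forall (th : R) (i : nat), (i < 6)%nat -> S 0 th i = S0_explicit th i) /\
  (forall (t : nat) (th : R),
      alpha (8 * t) th = alpha (4 * t) th /\
      alpha (4 * t) th = beta (8 * t) th /\
      beta (8 * t) th = beta (4 * t) th).
Proof.
  split; [|split].
  - intros t th i Hi. split; [apply S_double | apply S_double_succ]; exact Hi.
  - exact S_zero_explicit.
  - exact alpha_beta_8t_4t.
Qed.
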